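(* Consider the algebraic Riccati operator $$\mathscr R(X)=A^{\mathsf T}XE+E^{\mathsf T}XA+C^{\mathsf T}C-E^{\mathsf T}XBH^{-1}B^{\mathsf T}XE,$$ and let $X_1,\dots,X_n$ ($n\ge2$), with residual factors $R_1,\dots,R_n\in\mathbb{R}^{d\times r}$, inner factor $T$, increments $V_i$ and $\tilde Y_i$ ($i=2,\dots,n$) and shifts $\sigma_1,\dots,\sigma_{n-1}<0$, be generated by the RADI iteration described in the context. Let $\gamma_1,\dots,\gamma_n\in\mathbb{R}$ with $\sum_{i=1}^n\gamma_i=1$ (in particular, the RRE weights), and let $\widehat X=\sum_{i=1}^n\gamma_iX_i$. Then $\operatorname{range}(\mathscr R(\widehat X))\subseteq\operatorname{range}([\,R_1\ R_2\ \cdots\ R_n\,])$, and $$\mathscr R(\widehat X)=[\,R_1\ \cdots\ R_n\,]\,\mathscr H_n\,[\,R_1\ \cdots\ R_n\,]^{\mathsf T},$$ where $\mathscr H_n=\mathscr H_n(\gamma_1,\dots,\gamma_n)$ is the symmetric $nr\times nr$ matrix defined recursively as follows. For $n=2$, $$\mathscr H_2(\gamma_1,\gamma_2)=\begin{bmatrix}\gamma_1^2T+(\gamma_2-\gamma_2^2)\tilde Y_2 & (\gamma_2-\gamma_2^2)(T-\tilde Y_2)\\ (\gamma_2-\gamma_2^2)(T-\tilde Y_2) & \gamma_2^2T+(\gamma_2-\gamma_2^2)\tilde Y_2\end{bmatrix}.$$ For $n\ge3$, $\mathscr H_n=\mathscr A_n+\mathscr B_n+\mathscr C_n$, where $$\mathscr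 A_n=\operatorname{blkdiag}\big(\mathscr H_{n-1}(\gamma_1,\dots,\gamma_{n-2},\gamma_{n-1}+\gamma_n),\ 0_{r\times r}\big),$$ $$\mathscr B_n=\operatorname{blkdiag}\Big(0_{(n-2)r\times(n-2)r},\ \begin{bmatrix}(\gamma_n^2-2\gamma_n)T+(\gamma_n-\gamma_n^2)\tilde Y_n & (\gamma_n-\gamma_n^2)(T-\tilde Y_n)\\ (\gamma_n-\gamma_n^2)(T-\tilde Y_n) & \gamma_n^2T+(\gamma_n-\gamma_n^2)\tilde Y_n\end{bmatrix}\Big),$$ and $\mathscr C_n=\widetilde{\mathscr C}_n+\widetilde{\mathscr C}_n^{\mathsf T}$ with $$\widetilde{\mathscr C}_n=\begin{bmatrix}0_{(n-1)r\times(n-2)r} & M_n^d-M_n^t & M_n^t-M_n^d\\ 0_{r\times(n-2)r} & 0_{r\times r} & 0_{r\times r}\end{bmatrix},$$ where $M_n\in\mathbb{R}^{(n-2)r\times r}$ is the block column whose $i$-th block ($i=2,\dots,n-1$) is $\beta_{ni}\alpha_{in}C_{in}$, $M_n^d=\begin{bmatrix}M_n\\ 0_{r\times r}\end{bmatrix}$, $M_n^t=\begin{bmatrix}0_{r\times r}\\ M_n\end{bmatrix}$, and $$\alpha_{in}=\frac{1}{2\sqrt{\sigma_{i-1}\sigma_{n-1}}},\qquad \beta_{ni}=\gamma_n\sum_{j=1}^{i-1}\gamma_j,\qquad C_{in}=V_i^{\mathsf T}BH^{-1}B^{\mathsf T}V_n\in\mathbb{R}^{r\times r}.$$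
   Context: Data: $A,E\in\mathbb{R}^{d\times d}$, $B\in\mathbb{R}^{d\times p}$, $C\in\mathbb{R}^{q\times d}$, $H\in\mathbb{R}^{p\times p}$ symmetric positive definite. RADI iteration (real shifts): start from $X_1=Z_1D_1Z_1^{\mathsf T}$ with residual $\mathscr R(X_1)=R_1TR_1^{\mathsf T}$, where $R_1\in\mathbb{R}^{d\times r}$ and $T=T^{\mathsf T}\in\mathbb{R}^{r\times r}$ (e.g. $R_1=C^{\mathsf T}$, $T=I$ when $X_1=0$); set $V_1:=Z_1$, $\tilde Y_1^{-1}:=D_1$. For $i=1,2,\dots$, choose $\sigma_i<0$ and set $V_{i+1}=\sqrt{-2\sigma_i}\,(A^{\mathsf T}-E^{\mathsf T}X_iBH^{-1}B^{\mathsf T}+\sigma_iE^{\mathsf T})^{-1}R_iT\in\mathbb{R}^{d\times r}$, $\tilde Y_{i+1}=T-\frac{1}{2\sigma_i}(V_{i+1}^{\mathsf T}B)H^{-1}(V_{i+1}^{\mathsf T}B)^{\mathsf T}$, $\tilde D_{i+1}=\tilde Y_{i+1}^{-1}$, $X_{i+1}=X_i+V_{i+1}\tilde D_{i+1}V_{i+1}^{\mathsf T}$ (so $X_k=\sum_{i=1}^kV_i\tilde Y_i^{-1}V_i^{\mathsf T}$), and $R_{i+1}=R_i+\sqrt{-2\sigma_i}\,E^{\mathsf T}V_{i+1}\tilde D_{i+1}$. All inverses are assumed to exist. Along the iteration $\mathscr R(X_i)=R_iTR_i^{\mathsf T}$ holds with the same inner factor $T$ for all $i$. *)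

From HB Require Import structures.
From mathcomp Require Import all_boot all_order all_algebra.
Set Implicit Arguments. Unset Strict Implicit. Unset Printing Implicit Defensive.
Import Order.TTheory GRing.Theory Num.Theory.
Local Open Scope ring_scope.

Definition spd (R : realFieldType) (p : nat) (H : 'M[R]_p) : Prop :=
  H^T = H /\ forall x : 'cV[R]_p, x != 0 -> 0 < (x^T *m H *m x) ord0 ord0.

Definition riccati (R : fieldType) (d p q : nat)
  (A E : 'M[R]_d) (B : 'M[R]_(d, p)) (C : 'M[R]_(q, d)) (H : 'M[R]_p)
  (X : 'M[R]_d) : 'M[R]_d :=
  A^T *m X *m E + E^T *m X *m A + C^T *m C
  - E^T *m X *m B *m invmx H *m B^T *m X *m E.

(* range(M) <= range(N) (column spaces), via row spaces of the transposes. *)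
Definition col_range_sub (R : fieldType) (m n1 n2 : nat)
  (M : 'M[R]_(m, n1)) (N : 'M[R]_(m, n2)) : bool := (M^T <= N^T)%MS.

(* The blocks (indexed from 1) of the recursively defined matrix H_n.
   T : inner factor, Yt i : \tilde Y_i, Cc i n : C_{in}, sig i : sigma_i. *)
Section Hn.
Variables (R : rcfType) (r : nat) (T : 'M[R]_r) (Yt : nat -> 'M[R]_r)
          (Cc : nat -> nat -> 'M[R]_r) (sig : nat -> R).

Definition alpha (i n : nat) : R :=
  (2 * Num.sqrt (sig i.-1 * sig n.-1))^-1.

Definition beta (g : nat -> R) (n i : nat) : R :=
  g n * \sum_(1 <= j < i) g j.

Definition Mblk (g : nat -> R) (n i : nat) : 'M[R]_r :=
  if (2 <= i)%N && (i <= n.-1)%N then (beta g n i * alpha i n) *: Cc i n else 0.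

(* k-th block (k = 1..n-1) of M_n^d = [M_n; 0] and M_n^t = [0; M_n] *)
Definition Mdblk (g : nat -> R) (n k : nat) : 'M[R]_r :=
  if (k <= n - 2)%N then Mblk g n k.+1 else 0.
Definition Mtblk (g : nat -> R) (n k : nat) : 'M[R]_r :=
  if (2 <= k)%N then Mblk g n k else 0.

Definition Ctblk (g : nat -> R) (n i j : nat) : 'M[R]_r :=
  if (1 <= i)%N && (i <= n.-1)%N then
    if j == n.-1 then Mdblk g n i - Mtblk g n i
    else if j == n then Mtblk g n i - Mdblk g n i
    else 0
  else 0.

Definition Cblk (g : nat -> R) (n i j : nat) : 'M[R]_r :=
  Ctblk g n i j + (Ctblk g n j i)^T.

Definition Bblk (g : nat -> R) (n i j : nat) : 'M[R]_r :=
  let gn := g n in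
  if (i == n.-1) && (j == n.-1) then (gn ^+ 2 - 2 * gn) *: T + (gn - gn ^+ 2) *: Yt n
  else if ((i == n.-1) && (j == n)) || ((i == n) && (j == n.-1)) then
    (gn - gn ^+ 2) *: (T - Yt n)
  else if (i == n) && (j == n) then gn ^+ 2 *: T + (gn - gn ^+ 2) *: Yt n
  else 0.

Definition H2blk (g : nat -> R) (i j : nat) : 'M[R]_r :=
  let g1 := g 1%N in let g2 := g 2%N in
  if (i == 1%N) && (j == 1%N) then g1 ^+ 2 *: T + (g2 - g2 ^+ 2) *: Yt 2%N
  else if ((i == 1%N) && (j == 2%N)) || ((i == 2%N) && (j == 1%N)) then
    (g2 - g2 ^+ 2) *: (T - Yt 2%N)
  else if (i == 2%N) && (j == 2%N) then g2 ^+ 2 *: T + (g2 - g2 ^+ 2) *: Yt 2%N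
  else 0.

Definition gmerge (g : nat -> R) (n : nat) : nat -> R :=
  fun k => if k == n.-1 then g n.-1 + g n else g k.

Fixpoint Hblk (n : nat) (g : nat -> R) {struct n} : nat -> nat -> 'M[R]_r :=
  match n with
  | 0 | 1 => fun _ _ => 0
  | 2 => H2blk g
  | m.+1 => fun i j =>
      (if (i <= m)%N && (j <= m)%N then Hblk m (gmerge g m.+1) i j else 0)
      + Bblk g m.+1 i j + Cblk g m.+1 i j
  end.

Definition Hmat (n : nat) (g : nat -> R) : 'M[R]_(\sum_(i < n) r) :=
  \mxblock_(i < n, j < n) Hblk n g i.+1 j.+1.

End Hn.

Definition Rcat (R : fieldType) (d r n : nat) (Rs : nat -> 'M[R]_(d, r))
  : 'M[R]_(d, \sum_(j < n) r) := \mxrow_(j < n) Rs j.+1.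

From HB Require Import structures.
From mathcomp Require Import all_boot all_order all_algebra.
From mathcomp Require Import ring lra zify.
Import Order.TTheory GRing.Theory Num.Theory.
Local Open Scope ring_scope.

(* Write G = B H^-1 B^T and W_i = V_i Yt_i^-1 V_i^T ([incr i]), so X_(i+1) = X_i + W_(i+1).
   With s_i = sqrt(-2 sigma_i) ([rsig i]), the RADI formulas give E^T V_(i+1) Yt_(i+1)^-1 =
   (R_(i+1) - R_i) / s_i and (A^T - E^T X_i G) V_(i+1) = s_i R_i T - sigma_i E^T V_(i+1),
   so the exact second-order expansion of R(Y + c W_(i+1)) around a symmetric Y expresses
   every new term through R_i and R_(i+1).
   Induct on n: merging the last two weights gives an affine combination of
   X_1, ..., X_(n-1), which equals X_(n-1) - Z with Z = sum_j (gamma_1 + ... + gamma_(j-1)) W_j.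
   Its residual is the induction hypothesis (block A_n); adding gamma_n W_n contributes
   B_n through its own terms, and C_n through the cross terms E^T Z G W_n E, which are
   rearranged by a summation by parts. *)

Lemma trmxD (R : pzRingType) m n (A B : 'M[R]_(m, n)) : (A + B)^T = A^T + B^T.
Proof. exact: linearD. Qed.

Lemma trmxB (R : pzRingType) m n (A B : 'M[R]_(m, n)) : (A - B)^T = A^T - B^T.
Proof. exact: linearB. Qed.

Lemma trmxN (R : pzRingType) m n (A : 'M[R]_(m, n)) : (- A)^T = - A^T.
Proof. exact: linearN. Qed.

Lemma trmxZ (R : pzRingType) m n (a : R) (A : 'M[R]_(m, n)) : (a *: A)^T = a *: A^T.
Proof. exact: linearZ. Qed.

Lemma trmx_sum (R : pzRingType) m n (I : Type) (s : seq I) (P : pred I)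
    (F : I -> 'M[R]_(m, n)) :
  (\sum_(i <- s | P i) F i)^T = \sum_(i <- s | P i) (F i)^T.
Proof. exact: (big_morph _ (@trmxD R m n) (trmx0 _ _ _)). Qed.

Lemma mulZmx (R : pzRingType) m n k (a : R) (A : 'M[R]_(m, n)) (B : 'M[R]_(n, k)) :
  (a *: A) *m B = a *: (A *m B).
Proof. by rewrite scalemxAl. Qed.

Lemma mulmxZ (R : comPzRingType) m n k (a : R) (A : 'M[R]_(m, n)) (B : 'M[R]_(n, k)) :
  A *m (a *: B) = a *: (A *m B).
Proof. by rewrite scalemxAr. Qed.

Ltac mxexpand := rewrite ?(mulmxDl, mulmxDr, mulmxBl, mulmxBr, mulmxN, mulNmx,
  mulZmx, mulmxZ, trmxD, trmxB, trmxN, trmxZ, trmx_mul, trmxK,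
  mul0mx, mulmx0, trmx0, mulmxA).

Ltac mxring := apply/matrixP => ? ?; rewrite !mxE; ring.

Lemma big_nat_last2 (V : zmodType) (f : nat -> V) m :
  (forall j, (j <= m)%N -> f j = 0) -> \sum_(1 <= j < m.+3) f j = f m.+1 + f m.+2.
Proof.
move=> f0; rewrite big_nat_recr // big_nat_recr //= big_nat_cond big1 ?add0r //.
by move=> j /andP [/andP [_ jm] _]; apply: f0.
Qed.

Lemma big_nat12 (V : zmodType) (f : nat -> V) : \sum_(1 <= i < 3) f i = f 1%N + f 2%N.
Proof. by rewrite big_ltn // big_nat1. Qed.

Lemma mulmx_sum_by_parts (R : pzRingType) d r s (P : nat -> 'M[R]_(d, r))
    (M : nat -> 'M[R]_(r, s)) a b :
  (a <= b)%N -> M a = 0 -> M b = 0 ->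
  \sum_(a <= i < b) P i *m (M i.+1 - M i) = - \sum_(a.+1 <= i < b) (P i - P i.-1) *m M i.
Proof.
move=> ab Ma Mb.
have parts i : P i *m (M i.+1 - M i) =
    (P i *m M i.+1 - P i.-1 *m M i) - (P i - P i.-1) *m M i.
  by rewrite mulmxBr mulmxBl opprB addrA subrK.
rewrite (eq_bigr _ (fun i _ => parts i)) sumrB.
rewrite (telescope_sumr (fun i => P i.-1 *m M i)) //= Ma Mb !mulmx0 subrr sub0r.
case: (ltngtP a b) ab => // [ab _ | <- _]; last by rewrite !big_geq.
by rewrite big_ltn // Ma mulmx0 add0r.
Qed.

Definition riccati_quad {R : fieldType} {d p} (B : 'M[R]_(d, p)) (H : 'M[R]_p) : 'M[R]_d :=
  B *m invmx H *m B^T.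

Lemma riccati_quad_sym (R : fieldType) d p (B : 'M[R]_(d, p)) (H : 'M[R]_p) :
  H^T = H -> (riccati_quad B H)^T = riccati_quad B H.
Proof. by move=> Hs; rewrite /riccati_quad !trmx_mul trmxK trmx_inv Hs mulmxA. Qed.

Definition ricc_form {R : comNzRingType} {d} (A E G Q Y : 'M[R]_d) : 'M[R]_d :=
  A^T *m Y *m E + E^T *m Y *m A + Q - E^T *m Y *m G *m Y *m E.

Lemma riccatiE (R : fieldType) d p q (A E : 'M[R]_d) (B : 'M[R]_(d, p))
    (C : 'M[R]_(q, d)) (H : 'M[R]_p) (Y : 'M[R]_d) :
  riccati A E B C H Y = ricc_form A E (riccati_quad B H) (C^T *m C) Y.
Proof. by rewrite /riccati /ricc_form /riccati_quad !mulmxA. Qed.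

Lemma ricc_formDr (R : comNzRingType) d (A E G Q Y D : 'M[R]_d) :
  Y^T = Y -> D^T = D -> G^T = G ->
  ricc_form A E G Q (Y + D) = ricc_form A E G Q Y
    + ((A^T - E^T *m Y *m G) *m D *m E + ((A^T - E^T *m Y *m G) *m D *m E)^T)
    - E^T *m D *m G *m D *m E.
Proof.
move=> Ys Ds Gs; rewrite /ricc_form !trmx_mul trmxB !trmx_mul !trmxK Ys Ds Gs.
by mxexpand; mxring.
Qed.

Definition blkform {R : comPzRingType} {d r} (Rs : nat -> 'M[R]_(d, r)) m
    (Hb : nat -> nat -> 'M[R]_r) : 'M[R]_d :=
  \sum_(1 <= i < m.+1) \sum_(1 <= j < m.+1) Rs i *m Hb i j *m (Rs j)^T.

Lemma Rcat_mxblockE (R : fieldType) d r m (Rs : nat -> 'M[R]_(d, r))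
    (Hb : nat -> nat -> 'M[R]_r) :
  Rcat m Rs *m \mxblock_(i < m, j < m) Hb i.+1 j.+1 *m (Rcat m Rs)^T = blkform Rs m Hb.
Proof.
rewrite /Rcat /blkform mul_mxrow_mxblock tr_mxrow mul_mxrow_mxcol exchange_big /=.
rewrite big_add1 /= big_mkord; apply: eq_bigr => j _.
by rewrite big_add1 /= big_mkord mulmx_suml.
Qed.

Section BlockForm.
Variables (R : comPzRingType) (d r : nat) (Rs : nat -> 'M[R]_(d, r)).

Lemma blkformD m (Hb1 Hb2 : nat -> nat -> 'M[R]_r) :
  blkform Rs m (fun i j => Hb1 i j + Hb2 i j) = blkform Rs m Hb1 + blkform Rs m Hb2.
Proof.
rewrite /blkform -big_split; apply: eq_bigr => i _.
by rewrite -big_split; apply: eq_bigr => j _; rewrite mulmxDr mulmxDl.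
Qed.

Lemma blkform_tr m (Hb : nat -> nat -> 'M[R]_r) :
  blkform Rs m (fun i j => (Hb j i)^T) = (blkform Rs m Hb)^T.
Proof.
rewrite /blkform exchange_big_nat trmx_sum; apply: eq_bigr => i _.
by rewrite trmx_sum; apply: eq_bigr => j _; rewrite !trmx_mul trmxK mulmxA.
Qed.

Lemma blkform_widen m (Hb : nat -> nat -> 'M[R]_r) :
  blkform Rs m.+1 (fun i j => if (i <= m)%N && (j <= m)%N then Hb i j else 0) =
  blkform Rs m Hb.
Proof.
rewrite /blkform big_nat_recr //= [X in _ + X]big1 ?addr0; last first.
  by move=> j _; rewrite ltnn mulmx0 mul0mx.
apply: eq_big_nat => i /andP [_ im].
rewrite big_nat_recr //= ltnn andbF mulmx0 mul0mx addr0.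
by apply: eq_big_nat => j /andP [_ jm]; rewrite (im : (i <= m)%N) (jm : (j <= m)%N).
Qed.

End BlockForm.

Section BlockMatrices.
Variables (R : rcfType) (d r : nat) (T : 'M[R]_r) (Yt : nat -> 'M[R]_r)
  (Cc : nat -> nat -> 'M[R]_r) (sig : nat -> R) (Rs : nat -> 'M[R]_(d, r)).

Lemma Hblk_rec m g i j :
  Hblk T Yt Cc sig m.+3 g i j =
  (if (i <= m.+2)%N && (j <= m.+2)%N then Hblk T Yt Cc sig m.+2 (gmerge g m.+3) i j else 0)
  + Bblk T Yt g m.+3 i j + Cblk Cc sig g m.+3 i j.
Proof. by []. Qed.

Lemma Hblk_tr m :
  T^T = T -> (forall i, (2 <= i <= m)%N -> (Yt i)^T = Yt i) ->
  forall g i j, (Hblk T Yt Cc sig m g i j)^T = Hblk T Yt Cc sig m g j i.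
Proof.
move=> Ts; elim: m => [|m IH] Ys g i j; first by rewrite trmx0.
have Yms : (2 <= m.+1)%N -> (Yt m.+1)^T = Yt m.+1.
  by move=> m2; apply: Ys; rewrite m2 leqnn.
case: m IH Ys Yms => [|[|m]] IH Ys Yms; first by rewrite trmx0.
  rewrite /= /H2blk; case: eqP; case: eqP; case: eqP; case: eqP => /=;
  by rewrite ?trmx0 ?trmxD ?trmxZ ?trmxB ?Ts ?Yms.
have Bs : (Bblk T Yt g m.+3 i j)^T = Bblk T Yt g m.+3 j i.
  rewrite /Bblk; case: eqP; case: eqP; case: eqP; case: eqP => /=;
  by rewrite ?trmx0 ?trmxD ?trmxZ ?trmxB ?Ts ?Yms.
rewrite !Hblk_rec !trmxD Bs /Cblk trmxK [X in _ + X = _]addrC.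
congr (_ + _ + _); rewrite andbC; case: ifP => _; last by rewrite trmx0.
by apply: IH => l /andP [l2 lm]; apply: Ys; rewrite l2 ltnW.
Qed.

Lemma blkform_Bblk k g :
  blkform Rs k.+2 (Bblk T Yt g k.+2) =
  g k.+2 *: (Rs k.+1 *m T *m (Rs k.+2 - Rs k.+1)^T + (Rs k.+2 - Rs k.+1) *m T *m (Rs k.+1)^T)
  + (Rs k.+2 - Rs k.+1) *m (g k.+2 ^+ 2 *: T + (g k.+2 - g k.+2 ^+ 2) *: Yt k.+2)
    *m (Rs k.+2 - Rs k.+1)^T.
Proof.
have B0 i j : ((i <= k) || (j <= k))%N -> Bblk T Yt g k.+2 i j = 0.
  by case/orP => lek; rewrite /Bblk /= (@ltn_eqF _ k.+1 lek) (@ltn_eqF _ k.+2 (leqW lek)) ?andbF.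
rewrite /blkform big_nat_last2; last first.
  by move=> i ik; rewrite big1 // => j _; rewrite B0 ?ik // mulmx0 mul0mx.
rewrite !big_nat_last2; try by move=> j jk; rewrite B0 ?jk ?orbT // mulmx0 mul0mx.
rewrite /Bblk /= !eqxx (gtn_eqF (ltnSn _)) (ltn_eqF (ltnSn _)) /=.
by move: (g k.+2) => c; mxexpand; mxring.
Qed.

Lemma blkform_Ctblk k g :
  blkform Rs k.+2 (Ctblk Cc sig g k.+2) =
  \sum_(2 <= j < k.+2) (Rs j - Rs j.-1) *m Mblk Cc sig g k.+2 j *m (Rs k.+2 - Rs k.+1)^T.
Proof.
have Md i : Mdblk Cc sig g k.+2 i = Mblk Cc sig g k.+2 i.+1.
  rewrite /Mdblk /Mblk !subSS subn0; case: ifP => //= /negbT ik.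
  by case: ifP => // /andP [_]; rewrite ltnS (negbTE ik).
have Mt i : Mtblk Cc sig g k.+2 i = Mblk Cc sig g k.+2 i.
  by rewrite /Mtblk /Mblk; case: ifP => // ->.
have Ct0 i j : (j <= k)%N -> Ctblk Cc sig g k.+2 i j = 0.
  by move=> jk; rewrite /Ctblk /= (@ltn_eqF j k.+1 jk) (@ltn_eqF j k.+2 (leqW jk)); case: ifP.
rewrite /blkform big_nat_recr //= [X in _ + X]big1 ?addr0; last first.
  by move=> j _; rewrite /Ctblk ltnn andbF mulmx0 mul0mx.
transitivity (\sum_(1 <= i < k.+2) Rs i *m (Mblk Cc sig g k.+2 i.+1 - Mblk Cc sig g k.+2 i)
   *m (Rs k.+1 - Rs k.+2)^T).
  apply: eq_big_nat => i /andP [i1 ik].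
  rewrite big_nat_last2; last by move=> j jk; rewrite Ct0 // mulmx0 mul0mx.
  rewrite /Ctblk /= i1 -ltnS ik /= eqxx (gtn_eqF (ltnSn _)) eqxx Md Mt.
  by mxexpand; mxring.
rewrite -mulmx_suml mulmx_sum_by_parts //; last by rewrite /Mblk ltnn andbF.
by rewrite mulNmx -mulmxN -trmxN opprB mulmx_suml.
Qed.

Lemma gmerge_lt (g : nat -> R) m i : (i < m.-1)%N -> gmerge g m i = g i.
Proof. by move=> im; rewrite /gmerge (ltn_eqF im). Qed.

Lemma sum_gmerge (g : nat -> R) k : \sum_(1 <= i < k.+2) gmerge g k.+2 i = \sum_(1 <= i < k.+3) g i.
Proof.
rewrite big_nat_recr // (big_nat_recr k.+2) //= (big_nat_recr k.+1) //= {2}/gmerge /= eqxx.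
by rewrite addrA; congr (_ + _ + _); apply: eq_big_nat => i /andP [_ ik]; rewrite gmerge_lt.
Qed.

End BlockMatrices.

Section RADI.
Variables (R : rcfType) (d p q r n : nat)
  (A E : 'M[R]_d) (B : 'M[R]_(d, p)) (C : 'M[R]_(q, d)) (H : 'M[R]_p)
  (T : 'M[R]_r) (X : nat -> 'M[R]_d) (Rs V : nat -> 'M[R]_(d, r))
  (Yt : nat -> 'M[R]_r) (sig : nat -> R).

Local Notation G := (riccati_quad B H).
Local Notation ric := (ricc_form A E G (C^T *m C)).
Local Notation Cc := (fun i j => (V i)^T *m B *m invmx H *m B^T *m V j).

Definition radi_step i : Prop :=
  sig i < 0 /\
  A^T - E^T *m X i *m B *m invmx H *m B^T + sig i *: E^T \in unitmx /\
  V i.+1 = Num.sqrt (- 2 * sig i) *: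
           (invmx (A^T - E^T *m X i *m B *m invmx H *m B^T + sig i *: E^T)
            *m Rs i *m T) /\
  Yt i.+1 = T - (2 * sig i)^-1 *:
            ((V i.+1)^T *m B *m invmx H *m ((V i.+1)^T *m B)^T) /\
  Yt i.+1 \in unitmx /\
  X i.+1 = X i + V i.+1 *m invmx (Yt i.+1) *m (V i.+1)^T /\
  Rs i.+1 = Rs i + Num.sqrt (- 2 * sig i) *: (E^T *m V i.+1 *m invmx (Yt i.+1)).

Hypotheses (H_sym : H^T = H) (T_sym : T^T = T) (X1_sym : (X 1%N)^T = X 1%N)
  (radi : forall i, (1 <= i <= n.-1)%N -> radi_step i).

Definition incr i := V i *m invmx (Yt i) *m (V i)^T.
Definition rsig i := Num.sqrt (- 2 * sig i).

Section Step.
Variable j : nat.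
Hypothesis j_range : (1 <= j <= n.-1)%N.

Local Notation D := (Rs j.+1 - Rs j).

Lemma sig_lt0 : sig j < 0. Proof. by case: (radi _ j_range). Qed.

Lemma rsig_neq0 : rsig j != 0.
Proof. by rewrite gt_eqF // sqrtr_gt0; have := sig_lt0; lra. Qed.

Lemma sig_rsig : sig j = - (rsig j ^+ 2) / 2.
Proof. by rewrite /rsig sqr_sqrtr; [field | have := sig_lt0; lra]. Qed.

Lemma Yt_sym : (Yt j.+1)^T = Yt j.+1.
Proof.
have [_ [_ [_ [-> _]]]] := radi _ j_range.
by rewrite trmxB trmxZ T_sym !trmx_mul !trmxK trmx_inv H_sym !mulmxA.
Qed.

Lemma incr_sym : (incr j.+1)^T = incr j.+1.
Proof. by rewrite /incr !trmx_mul trmxK trmx_inv Yt_sym mulmxA. Qed.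

Lemma X_succ : X j.+1 = X j + incr j.+1.
Proof. by case: (radi _ j_range) => _ [_ [_ [_ [_ []]]]]. Qed.

Lemma EtV_invYt : E^T *m V j.+1 *m invmx (Yt j.+1) = (rsig j)^-1 *: D.
Proof.
have [_ [_ [_ [_ [_ [_ ->]]]]]] := radi _ j_range.
by rewrite addrC addKr scalerA mulVf ?rsig_neq0 // scale1r.
Qed.

Lemma EtV : E^T *m V j.+1 = ((rsig j)^-1 *: D) *m Yt j.+1.
Proof.
have [_ [_ [_ [_ [Yu _]]]]] := radi _ j_range.
by rewrite -EtV_invYt mulmxKV.
Qed.

Lemma Et_incr : E^T *m incr j.+1 = ((rsig j)^-1 *: D) *m (V j.+1)^T.
Proof. by rewrite /incr !mulmxA EtV_invYt. Qed.

Lemma incr_E : incr j.+1 *m E = V j.+1 *m ((rsig j)^-1 *: D)^T.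
Proof. by rewrite -EtV_invYt /incr !trmx_mul trmxK trmx_inv Yt_sym !mulmxA. Qed.

Lemma closed_loop_V : (A^T - E^T *m X j *m G) *m V j.+1 =
  rsig j *: (Rs j *m T) - sig j *: (E^T *m V j.+1).
Proof.
have [_ [Ku [-> _]]] := radi _ j_range.
set K := A^T - _ + _ in Ku *.
have -> : A^T - E^T *m X j *m G = K - sig j *: E^T.
  by rewrite /K addrK /riccati_quad !mulmxA.
rewrite mulmxBl -scalemxAl -!scalemxAr /rsig; congr (_ - _).
by rewrite !mulmxA mulmxV // mul1mx.
Qed.

Lemma VtGV : (V j.+1)^T *m G *m V j.+1 = (2 * sig j) *: (T - Yt j.+1).
Proof.
have [sj [_ [_ [-> _]]]] := radi _ j_range.
rewrite opprB addrC subrK scalerA mulfV ?scale1r; last first.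
  by rewrite mulf_neq0 ?pnatr_eq0 ?(ltr0_neq0 sj).
by rewrite /riccati_quad trmx_mul trmxK !mulmxA.
Qed.

Lemma closed_loop_incr : (A^T - E^T *m X j *m G) *m incr j.+1 *m E =
  Rs j *m T *m D^T + (1/2) *: (D *m Yt j.+1 *m D^T).
Proof.
rewrite -mulmxA incr_E mulmxA closed_loop_V EtV sig_rsig.
mxexpand; apply/matrixP => ? ?; rewrite !mxE; field; exact: rsig_neq0.
Qed.

Lemma incr_quad : E^T *m incr j.+1 *m G *m incr j.+1 *m E = - (D *m (T - Yt j.+1) *m D^T).
Proof.
rewrite -mulmxA incr_E mulmxA Et_incr.
have -> : (rsig j)^-1 *: D *m (V j.+1)^T *m G *m V j.+1 =
    (rsig j)^-1 *: D *m ((2 * sig j) *: (T - Yt j.+1)) by rewrite -VtGV !mulmxA.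
rewrite sig_rsig.
mxexpand; apply/matrixP => ? ?; rewrite !mxE; field; exact: rsig_neq0.
Qed.

Lemma ric_step Z c : Z^T = Z -> (X j)^T = X j ->
  ric (X j - Z + c *: incr j.+1) = ric (X j - Z) +
   (c *: (Rs j *m T *m D^T + D *m T *m (Rs j)^T)
    + D *m (c ^+ 2 *: T + (c - c ^+ 2) *: Yt j.+1) *m D^T)
   + (c *: (E^T *m Z *m G *m incr j.+1 *m E) + (c *: (E^T *m Z *m G *m incr j.+1 *m E))^T).
Proof.
move=> Zs Xs.
rewrite ricc_formDr ?riccati_quad_sym ?trmxB ?trmxZ ?Xs ?Zs ?incr_sym //.
have -> : (A^T - E^T *m (X j - Z) *m G) *m (c *: incr j.+1) *m E =
   c *: ((A^T - E^T *m X j *m G) *m incr j.+1 *m E) + c *: (E^T *m Z *m G *m incr j.+1 *m E).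
  by mxexpand; mxring.
have -> : E^T *m (c *: incr j.+1) *m G *m (c *: incr j.+1) *m E =
   (c * c) *: (E^T *m incr j.+1 *m G *m incr j.+1 *m E).
  by rewrite !(mulZmx, mulmxZ) scalerA.
rewrite closed_loop_incr incr_quad.
move: (E^T *m Z *m G *m incr j.+1 *m E) => U.
mxexpand; rewrite T_sym Yt_sym; apply/matrixP => ? ?; rewrite !mxE; by field.
Qed.

End Step.

Hypothesis X1_res : riccati A E B C H (X 1%N) = Rs 1%N *m T *m (Rs 1%N)^T.

Lemma X_sym j : (j <= n.-1)%N -> (X j.+1)^T = X j.+1.
Proof.
elim: j => [|j IH] jn; first exact: X1_sym.
have j1 : (1 <= j.+1 <= n.-1)%N by rewrite jn.
by rewrite (X_succ _ j1) trmxD IH ?(ltnW jn) // incr_sym.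
Qed.

Definition Zsum m (h : nat -> R) := \sum_(2 <= j < m.+1) (\sum_(1 <= i < j) h i) *: incr j.

Lemma sumX_decomp k h : (k <= n.-1)%N ->
  \sum_(1 <= i < k.+2) h i *: X i = (\sum_(1 <= i < k.+2) h i) *: X k.+1 - Zsum k.+1 h.
Proof.
rewrite /Zsum; elim: k => [|k IH] kn; first by rewrite !big_nat1 big_geq // subr0.
have k1 : (1 <= k.+1 <= n.-1)%N by rewrite kn.
rewrite big_nat_recr //= IH ?(ltnW kn) // (X_succ _ k1).
rewrite (big_nat_recr k.+2) //= (big_nat_recr k.+2 2) //=.
move: (\sum_(2 <= j < k.+2) _) (\sum_(1 <= i < k.+2) h i) => Z S.
by mxexpand; rewrite !scalerDr; mxring.
Qed.

Lemma Zsum_sym m h : (m <= n)%N -> (Zsum m h)^T = Zsum m h.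
Proof.
move=> mn; rewrite /Zsum trmx_sum; apply: eq_big_nat => -[|j] // /andP [j2 jm].
by rewrite trmxZ incr_sym //; lia.
Qed.

Lemma alpha_rsig i j : (1 <= i <= n.-1)%N -> (1 <= j <= n.-1)%N ->
  alpha sig i.+1 j.+1 = (rsig i)^-1 * (rsig j)^-1.
Proof.
move=> i1 j1; rewrite /alpha -invfM; congr (_^-1).
have si := sig_lt0 _ i1; have sj := sig_lt0 _ j1.
rewrite /rsig -sqrtrM; last by lra.
have -> : (-2 * sig i) * (-2 * sig j) = 2 ^+ 2 * (sig i * sig j) by ring.
by rewrite [RHS]sqrtrM ?exprn_ge0 // sqrtr_sqr ger0_norm.
Qed.

Lemma incr_cross i j : (1 <= i <= n.-1)%N -> (1 <= j <= n.-1)%N ->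
  E^T *m incr i.+1 *m G *m incr j.+1 *m E =
  alpha sig i.+1 j.+1 *: ((Rs i.+1 - Rs i) *m Cc i.+1 j.+1 *m (Rs j.+1 - Rs j)^T).
Proof.
move=> i1 j1; rewrite -mulmxA (incr_E _ j1) mulmxA (Et_incr _ i1) (alpha_rsig _ _ i1 j1).
have -> : Cc i.+1 j.+1 = (V i.+1)^T *m G *m V j.+1 by rewrite /riccati_quad !mulmxA.
move: (Rs i.+1 - Rs i) (Rs j.+1 - Rs j) => Di Dj.
by mxexpand; mxring.
Qed.

(* The cross terms between the earlier increments and the newest one form the block [C_(m+1)]. *)
Lemma Zsum_cross m g : (1 <= m <= n.-1)%N ->
  \sum_(2 <= j < m.+1) (Rs j - Rs j.-1) *m Mblk Cc sig g m.+1 j *m (Rs m.+1 - Rs m)^T =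
  g m.+1 *: (E^T *m Zsum m g *m G *m incr m.+1 *m E).
Proof.
move=> m1; rewrite /Zsum mulmx_sumr !mulmx_suml scaler_sumr.
apply: eq_big_nat => -[|j] // /andP [j2 jm].
have j1 : (1 <= j <= n.-1)%N by lia.
rewrite !(mulZmx, mulmxZ) scalerA (incr_cross _ _ j1 m1) scalerA.
by rewrite /Mblk j2 (jm : (j.+1 <= m.+1.-1)%N) /= mulmxZ mulZmx.
Qed.

Lemma sumX_gmerge k g : (k.+1 <= n.-1)%N ->
  \sum_(1 <= i < k.+3) g i *: X i =
  \sum_(1 <= i < k.+2) gmerge g k.+2 i *: X i + g k.+2 *: incr k.+2.
Proof.
move=> kn; have k1 : (1 <= k.+1 <= n.-1)%N by rewrite kn.
rewrite big_nat_recr // (big_nat_recr k.+1) //= (big_nat_recr k.+1) //= (X_succ _ k1).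
rewrite {2}/gmerge /= eqxx.
under [in RHS]eq_big_nat => i /andP [_ ik] do rewrite gmerge_lt //.
by move: (\sum_(1 <= i < k.+1) _) => S; mxring.
Qed.

Lemma blkform_H2 g : (2 <= n)%N -> \sum_(1 <= i < 3) g i = 1 ->
  blkform Rs 2 (Hblk T Yt Cc sig 2 g) = ric (\sum_(1 <= i < 3) g i *: X i).
Proof.
rewrite !big_nat12 => n2 g12.
have g1 : g 1%N = 1 - g 2%N by rewrite -g12 addrK.
have n1 : (1 <= 1 <= n.-1)%N by rewrite /=; lia.
have -> : g 1%N *: X 1%N + g 2%N *: X 2%N = X 1%N - 0 + g 2%N *: incr 2.
  by rewrite (X_succ _ n1) g1; move: (X 1%N) (incr 2) => X1 W; mxring.
rewrite ric_step ?trmx0 // subr0 -riccatiE X1_res.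
rewrite [Hblk _ _ _ _ 2 g]/= /blkform !big_nat12 /H2blk /= g1.
by move: (g 2%N) => c; mxexpand; mxring.
Qed.

Lemma blkform_HblkS k g : (k.+3 <= n)%N ->
  blkform Rs k.+2 (Hblk T Yt Cc sig k.+2 (gmerge g k.+3)) =
    ric (\sum_(1 <= i < k.+3) gmerge g k.+3 i *: X i) ->
  \sum_(1 <= i < k.+4) g i = 1 ->
  blkform Rs k.+3 (Hblk T Yt Cc sig k.+3 g) = ric (\sum_(1 <= i < k.+4) g i *: X i).
Proof.
move=> kn IH g1; have k1 : (1 <= k.+2 <= n.-1)%N by lia.
have Zg : Zsum k.+2 (gmerge g k.+3) = Zsum k.+2 g.
  apply: eq_big_nat => j /andP [_ jk]; congr (_ *: _).
  by apply: eq_big_nat => i /andP [_ ij]; rewrite gmerge_lt //; lia.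
have Xg : \sum_(1 <= i < k.+3) gmerge g k.+3 i *: X i = X k.+2 - Zsum k.+2 g.
  by rewrite sumX_decomp ?sum_gmerge ?g1 ?scale1r ?Zg //; lia.
rewrite sumX_gmerge; last by lia.
rewrite Xg ric_step ?Zsum_sym ?X_sym //; try lia.
rewrite -Xg -IH !blkformD blkform_widen blkform_Bblk blkform_tr blkform_Ctblk.
by rewrite Zsum_cross //; lia.
Qed.

Lemma blkform_Hblk k g : (k.+2 <= n)%N -> \sum_(1 <= i < k.+3) g i = 1 ->
  blkform Rs k.+2 (Hblk T Yt Cc sig k.+2 g) = ric (\sum_(1 <= i < k.+3) g i *: X i).
Proof.
elim: k g => [|k IH] g kn g1; first exact: blkform_H2.
by apply: blkform_HblkS => //; apply: IH; rewrite ?sum_gmerge //; lia.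
Qed.

Lemma Hmat_sym g : (Hmat T Yt Cc sig n g)^T = Hmat T Yt Cc sig n g.
Proof.
rewrite /Hmat tr_mxblock; apply: eq_mxblock => i j; apply: Hblk_tr => // -[|l] // l2.
by apply: Yt_sym; lia.
Qed.

Lemma riccati_affine_comb g : (2 <= n)%N -> \sum_(1 <= i < n.+1) g i = 1 ->
  (Hmat T Yt Cc sig n g)^T = Hmat T Yt Cc sig n g /\
  riccati A E B C H (\sum_(1 <= i < n.+1) g i *: X i) =
  Rcat n Rs *m Hmat T Yt Cc sig n g *m (Rcat n Rs)^T.
Proof.
move=> n2 g1; split; first exact: Hmat_sym.
have [k nk] : exists k, n = k.+2 by exists n.-2; lia.
rewrite riccatiE /Hmat Rcat_mxblockE; move: g1; rewrite nk => g1.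
by rewrite blkform_Hblk // nk.
Qed.

End RADI.

Theorem theorem2 (R : rcfType) (d p q r n : nat)
  (A E : 'M[R]_d) (B : 'M[R]_(d, p)) (C : 'M[R]_(q, d)) (H : 'M[R]_p)
  (T : 'M[R]_r)
  (X : nat -> 'M[R]_d) (Rs : nat -> 'M[R]_(d, r)) (V : nat -> 'M[R]_(d, r))
  (Yt : nat -> 'M[R]_r) (sig : nat -> R)
  (k : nat) (Z1 : 'M[R]_(d, k)) (D1 : 'M[R]_k)
  (g : nat -> R) :
  spd H ->
  (2 <= n)%N ->
  T^T = T ->
  D1^T = D1 ->
  X 1%N = Z1 *m D1 *m Z1^T ->
  riccati A E B C H (X 1%N) = Rs 1%N *m T *m (Rs 1%N)^T ->
  (forall i, (1 <= i <= n.-1)%N ->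
     sig i < 0 /\
         A^T - E^T *m X i *m B *m invmx H *m B^T + sig i *: E^T \in unitmx /\
         V i.+1 = Num.sqrt (- 2 * sig i) *:
                  (invmx (A^T - E^T *m X i *m B *m invmx H *m B^T + sig i *: E^T)
                   *m Rs i *m T) /\
         Yt i.+1 = T - (2 * sig i)^-1 *:
                   ((V i.+1)^T *m B *m invmx H *m ((V i.+1)^T *m B)^T) /\
         Yt i.+1 \in unitmx /\
         X i.+1 = X i + V i.+1 *m invmx (Yt i.+1) *m (V i.+1)^T /\
         Rs i.+1 = Rs i + Num.sqrt (- 2 * sig i) *: (E^T *m V i.+1 *m invmx (Yt i.+1))) ->
  \sum_(1 <= i < n.+1) g i = 1 ->
  let Xhat := \sum_(1 <= i < n.+1) g i *: X i in
  let Rn := Rcat n Rs in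
  let Hn := Hmat T Yt (fun i j => (V i)^T *m B *m invmx H *m B^T *m V j) sig n g in
  [/\ Hn^T = Hn,
      col_range_sub (riccati A E B C H Xhat) Rn &
      riccati A E B C H Xhat = Rn *m Hn *m Rn^T].
Proof.
move=> [H_sym _] n2 T_sym D1_sym X1_def X1_res radi g1 Xhat Rn Hn.
have X1_sym : (X 1%N)^T = X 1%N by rewrite X1_def !trmx_mul trmxK D1_sym mulmxA.
have [Hn_sym res] : Hn^T = Hn /\ riccati A E B C H Xhat = Rn *m Hn *m Rn^T.
  by apply: riccati_affine_comb.
split=> //.
by rewrite /col_range_sub res -mulmxA trmx_mul submxMl.
Qed.
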